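(* There exists a beyond quantum state $W \in \mathcal{W}(\mathbb{C}^2\otimes\mathbb{C}^2)$ whose classical-input classical-output correlations are classically simulable; that is, there exist a probability space $(\Lambda,\omega)$ and, for every finite-outcome POVM $A=\{A_i\}_i$ on $\mathbb{C}^2$ and every finite-outcome POVM $B=\{B_j\}_j$ on $\mathbb{C}^2$, measurable response functions $\lambda\mapsto P(A_i|A,\lambda)\in[0,1]$ and $\lambda\mapsto P(B_j|B,\lambda)\in[0,1]$ with $\sum_i P(A_i|A,\lambda)=1=\sum_j P(B_j|B,\lambda)$ for all $\lambda$, such that for all such POVMs $A,B$ and all outcomes $i,j$, $$\operatorname{Tr}\big[W(A_i\otimes B_j)\big]=\int_\Lambda P(A_i|A,\lambda)\,P(B_j|B,\lambda)\,d\omega(\lambda).$$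
   Context: For finite-dimensional Hilbert spaces $\mathcal{H}_{A_1},\dots,\mathcal{H}_{A_n}$, a POPT (positive over all pure tensors) state is a Hermitian operator $W$ on $\bigotimes_i\mathcal{H}_{A_i}$ with $\operatorname{Tr}W=1$ and $\operatorname{Tr}[W(P_1\otimes\cdots\otimes P_n)]\ge 0$ for all positive semidefinite operators $P_i$ on $\mathcal{H}_{A_i}$; the set of POPT states is denoted $\mathcal{W}(\bigotimes_i\mathcal{H}_{A_i})$. A beyond quantum state (BQS) is a POPT state that is not positive semidefinite, i.e. an element of $\mathcal{W}(\bigotimes_i\mathcal{H}_{A_i})\setminus\mathcal{D}(\bigotimes_i\mathcal{H}_{A_i})$, where $\mathcal{D}$ denotes the set of density operators (positive semidefinite, unit trace). A POVM on $\mathcal{H}$ is a finite family of positive semidefinite operators summing to the identity. *)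

From HB Require Import structures.
From mathcomp Require Import all_boot all_order all_algebra.
From mathcomp Require Import all_classical all_reals all_analysis.
From mathcomp Require Import complex mxtens.

Set Implicit Arguments.
Unset Strict Implicit.
Unset Printing Implicit Defensive.

Import Order.TTheory GRing.Theory Num.Theory.
Local Open Scope ring_scope.

Section Defs.
Variable R : realType.
Local Notation C := (complex R).

Definition adjmx m n (A : 'M[C]_(m, n)) : 'M[C]_(n, m) :=
  \matrix_(i, j) Num.conj (A j i).

(* positive semidefinite: <v, A v> >= 0 for all v (in the order of C,
   which means real and nonnegative) *)
Definition psd n (A : 'M[C]_n) : Prop :=
  forall v : 'cV[C]_n, 0 <= (adjmx v *m A *m v) 0 0.

Definition hermitian n (A : 'M[C]_n) : Prop := adjmx A = A.

Definition density n (W : 'M[C]_n) : Prop := psd W /\ \tr W = 1.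

Definition popt m n (W : 'M[C]_(m * n)) : Prop :=
  [/\ hermitian W, \tr W = 1 &
      forall (P1 : 'M[C]_m) (P2 : 'M[C]_n), psd P1 -> psd P2 ->
        0 <= \tr (W *m (P1 *t P2))].

Definition bqs m n (W : 'M[C]_(m * n)) : Prop := popt W /\ ~ density W.

Definition povm n k (A : 'I_k -> 'M[C]_n) : Prop :=
  (forall i, psd (A i)) /\ \sum_(i < k) A i = 1%:M.

Definition response d (T : measurableType d) n :=
  forall k : nat, ('I_k -> 'M[C]_n) -> T -> 'I_k -> R.

Definition valid_response d (T : measurableType d) n (p : response T n) :
  Prop :=
  forall k (A : 'I_k -> 'M[C]_n), povm A ->
    [/\ forall i, measurable_fun setT (fun l => p k A l i),
        forall l i, 0 <= p k A l i <= 1 &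
        forall l, \sum_(i < k) p k A l i = 1].
End Defs.

(* The state is W_t = (1 (x) 1 + t (X (x) X + Z (x) Z)) / 4 with t = 33/64.  On a
   product P (x) Q of positive operators it evaluates to p0 q0 + t (pX qX + pZ qZ),
   where (p0, pX, pZ) are the coefficients of 1, X, Z in P; since
   pX^2 + pZ^2 <= p0^2 this is nonnegative for |t| <= 1.  But the singlet
   |01> - |10> is an eigenvector of W_t with eigenvalue (1 - 2t)/4 < 0.

   The hidden variable is a point u of a weighted 12-point design on the unit circle
   of the x-z plane.  Bob answers B_j with probability b0 + (bX, bZ).u.  The x-z part
   of A_i is (a0 + r)/2 P_n + (a0 - r)/2 P_(-n) with n a unit vector, and Alice lets
   the projector P_n answer with a cubic c(n.u) whose design averages against 1 and
   u are 1 and t n.  Renormalising Alice's answers so that they sum to 1 does not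
   change these averages because the POVM sums to the identity, hence
   E[Alice_i Bob_j] = a0 b0 + t (aX bX + aZ bZ) = Tr[W_t (A_i (x) B_j)]. *)

From Pilot Require Import Defs.
From HB Require Import structures.
From mathcomp Require Import all_boot all_order all_algebra.
From mathcomp Require Import all_classical all_reals all_analysis.
From mathcomp Require Import complex mxtens.
From mathcomp Require Import ring lra.
Import Order.TTheory GRing.Theory Num.Theory.
Local Open Scope ring_scope.
Local Open Scope complex_scope.
Set Implicit Arguments.
Unset Strict Implicit.

Lemma big_ord2 (V : nmodType) (F : 'I_2 -> V) : \sum_(i < 2) F i = F 0 + F 1.
Proof. by rewrite big_ord_recl big_ord1; congr (_ + F _); apply: val_inj. Qed.

Lemma mxtrace2 (R : pzRingType) (M : 'M[R]_2) : \tr M = M 0 0 + M 1 1.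
Proof. by rewrite /mxtrace big_ord2. Qed.

Lemma mxtrace_tensmx (R : comPzRingType) m n (A : 'M[R]_m) (B : 'M[R]_n) :
  \tr (A *t B) = \tr A * \tr B.
Proof. by rewrite /mxtrace mulr_sum; apply: eq_bigr => k _; rewrite mxE. Qed.

Lemma binary_form_ge0 (R : realFieldType) (a p b : R) :
  (forall x y, 0 <= a * x ^+ 2 + p * x * y + b * y ^+ 2) ->
  [/\ 0 <= a, 0 <= b & p ^+ 2 <= 4 * a * b].
Proof.
move=> q.
have a_ge0 : 0 <= a by have := q 1 0; lra.
have b_ge0 : 0 <= b by have := q 0 1; lra.
split=> //.
have : 0 <= (a + b) * (4 * a * b - p ^+ 2).
  have -> : (a + b) * (4 * a * b - p ^+ 2) =
    (a * p ^+ 2 + p * p * (- 2 * a) + b * (- 2 * a) ^+ 2) +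
    (a * (- 2 * b) ^+ 2 + p * (- 2 * b) * p + b * p ^+ 2) by ring.
  exact: addr_ge0.
have [ab0 _ | ab0] := eqVneq (a + b) 0.
  have p_ge0 := q 1 1; have p_le0 := q 1 (-1).
  have -> : p = 0 by lra.
  nra.
by rewrite pmulr_rge0 ?subr_ge0 // lt_def ab0 addr_ge0.
Qed.

Lemma norm_dot2_le (R : realFieldType) (a0 a1 a2 b0 b1 b2 : R) :
  0 <= a0 -> a1 ^+ 2 + a2 ^+ 2 <= a0 ^+ 2 ->
  0 <= b0 -> b1 ^+ 2 + b2 ^+ 2 <= b0 ^+ 2 ->
  `|a1 * b1 + a2 * b2| <= a0 * b0.
Proof.
move=> a0_ge0 ha b0_ge0 hb.
have lagrange : (a1 * b1 + a2 * b2) ^+ 2 + (a1 * b2 - a2 * b1) ^+ 2 =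
  (a1 ^+ 2 + a2 ^+ 2) * (b1 ^+ 2 + b2 ^+ 2) by ring.
have : (a1 ^+ 2 + a2 ^+ 2) * (b1 ^+ 2 + b2 ^+ 2) <= (a0 * b0) ^+ 2.
  by rewrite exprMn ler_pM // addr_ge0 // sqr_ge0.
have := sqr_ge0 (a1 * b2 - a2 * b1); have := mulr_ge0 a0_ge0 b0_ge0.
rewrite -lagrange ler_norml; move: (a1 * b1 + a2 * b2) => d.
by move=> *; apply/andP; split; nra.
Qed.

Lemma le1_of_sum_eq1 (R : numDomainType) k (p : 'I_k -> R) (i : 'I_k) :
  (forall j, 0 <= p j) -> \sum_j p j = 1 -> p i <= 1.
Proof.
move=> p_ge0 <-; rewrite (bigD1 i) //= lerDl.
by apply: sumr_ge0 => j _; apply: p_ge0.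
Qed.

Section Normalization.
Variables (R : realFieldType) (k : nat) (phi w : 'I_k -> R).

Definition normalize (i : 'I_k) : R := phi i - w i * (\sum_j phi j - 1).

Lemma sum_normalize : \sum_i w i = 1 -> \sum_i normalize i = 1.
Proof. by move=> w1; rewrite sumrB -mulr_suml w1 mul1r subKr. Qed.

Lemma normalize_ge0 (c : R) (i : 'I_k) :
  0 <= w i -> c * w i <= phi i -> \sum_j phi j <= 1 + c -> 0 <= normalize i.
Proof.
move=> wi_ge0 phi_ge sum_le; rewrite /normalize subr_ge0.
apply: le_trans phi_ge; rewrite [c * _]mulrC ler_wpM2l //; lra.
Qed.
End Normalization.

Section Qubit.
Variable R : realType.
Local Notation C := (complex R).

Definition pauliX : 'M[C]_2 := delta_mx 0 1 + delta_mx 1 0.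
Definition pauliZ : 'M[C]_2 := delta_mx 0 0 - delta_mx 1 1.

Lemma mxtrace_pauliX_mul (M : 'M[C]_2) : \tr (pauliX *m M) = M 0 1 + M 1 0.
Proof. by rewrite mxtrace2 !mxE !big_ord2 !mxE /=; ring. Qed.

Lemma mxtrace_pauliZ_mul (M : 'M[C]_2) : \tr (pauliZ *m M) = M 0 0 - M 1 1.
Proof. by rewrite mxtrace2 !mxE !big_ord2 !mxE /=; ring. Qed.

Lemma conj_real_complex (x : R) : Num.conj x%:C = x%:C.
Proof. by rewrite conj_Creal // complex_real. Qed.

Lemma adjmxD m n (A B : 'M[C]_(m, n)) : adjmx (A + B) = adjmx A + adjmx B.
Proof. by apply/matrixP => i j; rewrite !mxE rmorphD. Qed.

Lemma adjmxB m n (A B : 'M[C]_(m, n)) : adjmx (A - B) = adjmx A - adjmx B.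
Proof. by apply/matrixP => i j; rewrite !mxE rmorphB. Qed.

Lemma adjmxZ m n (a : C) (A : 'M[C]_(m, n)) :
  adjmx (a *: A) = Num.conj a *: adjmx A.
Proof. by apply/matrixP => i j; rewrite !mxE rmorphM. Qed.

Lemma adjmx_tens m n p q (A : 'M[C]_(m, n)) (B : 'M[C]_(p, q)) :
  adjmx (A *t B) = adjmx A *t adjmx B.
Proof. by apply/matrixP => i j; rewrite !mxE rmorphM. Qed.

Lemma adjmx1 n : adjmx (1%:M : 'M[C]_n) = 1%:M.
Proof. by apply/matrixP => i j; rewrite !mxE rmorph_nat eq_sym. Qed.

Lemma adjmx_delta m n (i : 'I_m) (j : 'I_n) :
  adjmx (delta_mx i j : 'M[C]_(m, n)) = delta_mx j i.
Proof. by apply/matrixP => k l; rewrite !mxE rmorph_nat andbC. Qed.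

Lemma adjmx_pauliX : adjmx pauliX = pauliX.
Proof. by rewrite adjmxD !adjmx_delta addrC. Qed.

Lemma adjmx_pauliZ : adjmx pauliZ = pauliZ.
Proof. by rewrite adjmxB !adjmx_delta. Qed.

Lemma psd2_quadratic (M : 'M[C]_2) (x y : R) : psd M ->
  0 <= x%:C ^+ 2 * M 0 0 + (x * y)%:C * (M 0 1 + M 1 0) + y%:C ^+ 2 * M 1 1.
Proof.
move=> /(_ (\col_i (if i == 0 then x%:C else y%:C))).
rewrite !mxE !big_ord2 !mxE !big_ord2 !mxE /= !conj_real_complex.
by congr (_ <= _); rewrite rmorphM /=; ring.
Qed.

Lemma psd2_real_traces (M : 'M[C]_2) : psd M ->
  [/\ \tr M \is Num.real, \tr (pauliX *m M) \is Num.real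
    & \tr (pauliZ *m M) \is Num.real].
Proof.
move=> hM; rewrite mxtrace2 mxtrace_pauliX_mul mxtrace_pauliZ_mul.
have q x y := psd2_quadratic x y hM.
have r00 : M 0 0 \is Num.real.
  apply: ger0_real; move: (q 1 0).
  by rewrite !(rmorph0, rmorph1, mulr0, expr1n, expr0n, mul1r, mul0r, addr0).
have r11 : M 1 1 \is Num.real.
  apply: ger0_real; move: (q 0 1).
  by rewrite !(rmorph0, rmorph1, mul0r, expr1n, expr0n, mul1r, add0r).
have r01 : M 0 1 + M 1 0 \is Num.real.
  have -> : M 0 1 + M 1 0 = M 0 0 + (M 0 1 + M 1 0) + M 1 1 - (M 0 0 + M 1 1).
    by ring.
  apply: rpredB (rpredD r00 r11); apply: ger0_real.
  by move: (q 1 1); rewrite !(rmorph1, mulr1, expr1n, mul1r).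
by split; [exact: rpredD | | exact: rpredB].
Qed.

(* The coefficients of 1, X and Z in the Pauli expansion of M; the coefficient
   of Y never matters because the state below only involves X and Z. *)
Definition bloch0 (M : 'M[C]_2) : R := complex.Re (\tr M) / 2.
Definition blochX (M : 'M[C]_2) : R := complex.Re (\tr (pauliX *m M)) / 2.
Definition blochZ (M : 'M[C]_2) : R := complex.Re (\tr (pauliZ *m M)) / 2.

Lemma psd2_traces (M : 'M[C]_2) : psd M ->
  [/\ \tr M = (2 * bloch0 M)%:C, \tr (pauliX *m M) = (2 * blochX M)%:C
    & \tr (pauliZ *m M) = (2 * blochZ M)%:C].
Proof.
by case/psd2_real_traces => *; split; rewrite mulrC divfK ?pnatr_eq0 // RRe_real.
Qed.

Lemma psd2_bloch_form (M : 'M[C]_2) (x y : R) : psd M ->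
  0 <= (bloch0 M + blochZ M) * x ^+ 2 + 2 * blochX M * x * y
       + (bloch0 M - blochZ M) * y ^+ 2.
Proof.
move=> hM; have [t0 tX tZ] := psd2_traces hM.
rewrite mxtrace2 in t0; rewrite mxtrace_pauliX_mul in tX.
rewrite mxtrace_pauliZ_mul in tZ.
have e00 : M 0 0 = ((M 0 0 + M 1 1) + (M 0 0 - M 1 1)) / 2 by field.
have e11 : M 1 1 = ((M 0 0 + M 1 1) - (M 0 0 - M 1 1)) / 2 by field.
rewrite t0 tZ in e00 e11.
have := psd2_quadratic x y hM; rewrite tX e00 e11 -ler0c.
move: (bloch0 M) (blochX M) (blochZ M) => a b c.
by congr (_ <= _); rewrite !(rmorph_nat, rmorphD, rmorphB, rmorphM, rmorphXn); field.
Qed.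

Lemma psd2_bloch_bound (M : 'M[C]_2) : psd M ->
  0 <= bloch0 M /\ blochX M ^+ 2 + blochZ M ^+ 2 <= bloch0 M ^+ 2.
Proof.
move=> hM; have [] := binary_form_ge0 (fun x y => psd2_bloch_form x y hM).
move: (bloch0 M) (blochX M) (blochZ M) => a b c ha hb hp; split; first lra.
rewrite -subr_ge0; rewrite -subr_ge0 in hp; lra.
Qed.

Lemma povm_bloch_sums k (A : 'I_k -> 'M[C]_2) : povm A ->
  [/\ \sum_i bloch0 (A i) = 1, \sum_i blochX (A i) = 0 & \sum_i blochZ (A i) = 0].
Proof.
case=> A_psd A_sum.
have sum_tr N (f : 'M[C]_2 -> R) :
    (forall M, psd M -> \tr (N *m M) = (2 * f M)%:C) ->
    (2 * \sum_i f (A i))%:C = \tr (N *m 1%:M).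
  move=> hf; rewrite -A_sum mulmx_sumr raddf_sum mulr_sumr rmorph_sum.
  by apply: eq_bigr => i _; rewrite /= hf.
have t0 M : psd M -> \tr (1%:M *m M) = (2 * bloch0 M)%:C.
  by rewrite mul1mx => /psd2_traces[].
have tX M : psd M -> \tr (pauliX *m M) = (2 * blochX M)%:C by case/psd2_traces.
have tZ M : psd M -> \tr (pauliZ *m M) = (2 * blochZ M)%:C by case/psd2_traces.
move: (sum_tr _ _ t0) (sum_tr _ _ tX) (sum_tr _ _ tZ).
rewrite mulmx1 mxtrace1 mxtrace_pauliX_mul mxtrace_pauliZ_mul !mxE /= addr0 subrr.
move=> /(congr1 (@complex.Re R)) s0 /(congr1 (@complex.Re R)) sX.
move=> /(congr1 (@complex.Re R)) sZ.
by rewrite /= in s0 sX sZ; split; lra.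
Qed.
End Qubit.
Arguments pauliX {R}.
Arguments pauliZ {R}.

Section PauliState.
Variable R : realType.
Local Notation C := (complex R).

Definition wstate (t : R) : 'M[C]_(2 * 2) :=
  4^-1 *: (1%:M *t 1%:M + t%:C *: (pauliX *t pauliX + pauliZ *t pauliZ)).

Lemma mxtrace_wstate_tens t (M N : 'M[C]_2) :
  \tr (wstate t *m (M *t N)) =
  4^-1 * (\tr M * \tr N + t%:C * (\tr (pauliX *m M) * \tr (pauliX *m N)
                                  + \tr (pauliZ *m M) * \tr (pauliZ *m N))).
Proof.
by rewrite -scalemxAl mulmxDl -scalemxAl mulmxDl !tensmx_mul !mul1mx
  !(mxtraceZ, mxtraceD) !mxtrace_tensmx.
Qed.

Lemma mxtrace_wstate_psd t (M N : 'M[C]_2) : psd M -> psd N ->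
  \tr (wstate t *m (M *t N)) =
  (bloch0 M * bloch0 N + t * (blochX M * blochX N + blochZ M * blochZ N))%:C.
Proof.
rewrite mxtrace_wstate_tens => /psd2_traces [-> -> ->] /psd2_traces [-> -> ->].
move: (bloch0 M) (blochX M) (blochZ M) (bloch0 N) (blochX N) (blochZ N).
by move=> *; rewrite !(rmorph_nat, rmorphD, rmorphM); field.
Qed.

Lemma mxtrace_wstate t : \tr (wstate t) = 1.
Proof.
rewrite !(mxtraceZ, mxtraceD) !mxtrace_tensmx mxtrace1 !mxtrace2 !mxE /=.
by rewrite !(mul0r, mulr0, add0r, addr0, subrr); field.
Qed.

Lemma wstate_hermitian t : Defs.hermitian (wstate t).
Proof.
rewrite /Defs.hermitian /wstate adjmxZ adjmxD adjmxZ adjmxD !adjmx_tens.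
by rewrite adjmx1 adjmx_pauliX adjmx_pauliZ conj_real_complex fmorphV rmorph_nat.
Qed.

Lemma wstate_popt t : `|t| <= 1 -> popt (wstate t).
Proof.
move=> t_le1; split; [exact: wstate_hermitian | exact: mxtrace_wstate |].
move=> P Q hP hQ; rewrite mxtrace_wstate_psd // ler0c.
have [p0_ge0 hp] := psd2_bloch_bound hP; have [q0_ge0 hq] := psd2_bloch_bound hQ.
have := norm_dot2_le p0_ge0 hp q0_ge0 hq.
move: (blochX P * blochX Q + blochZ P * blochZ Q) (bloch0 P * bloch0 Q) => d pq hd.
have : `|t * d| <= pq by rewrite normrM -[pq]mul1r ler_pM.
by rewrite ler_norml => /andP[+ _]; lra.
Qed.

Local Notation e i := (delta_mx i 0 : 'cV[C]_2).

(* Typed with width 1 * 1 (convertible to 1) so that the tensor lemmas apply. *)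
Definition singlet : 'M[C]_(2 * 2, 1 * 1) := e 0 *t e 1 - e 1 *t e 0.

Lemma wstate_singlet t :
  wstate t *m singlet = ((1 - 2 * t%:C) / 4) *: singlet.
Proof.
have X0 : pauliX *m e 0 = e 1.
  by rewrite mulmxDl mul_delta_mx mul_delta_mx_0 ?add0r.
have X1 : pauliX *m e 1 = e 0.
  by rewrite mulmxDl mul_delta_mx mul_delta_mx_0 ?addr0.
have Z0 : pauliZ *m e 0 = e 0.
  by rewrite mulmxBl mul_delta_mx mul_delta_mx_0 ?subr0.
have Z1 : pauliZ *m e 1 = - e 1.
  by rewrite mulmxBl mul_delta_mx mul_delta_mx_0 ?sub0r.
rewrite /wstate /singlet -scalemxAl mulmxDl -scalemxAl mulmxDl !mulmxBr.
rewrite !tensmx_mul !mul1mx X0 X1 Z0 Z1.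
by apply/matrixP => i j; rewrite !mxE; ring.
Qed.

Lemma singlet_norm : (adjmx singlet *m singlet) 0 0 = 2.
Proof.
rewrite /singlet adjmxB !adjmx_tens !adjmx_delta mulmxBl !mulmxBr !tensmx_mul.
rewrite !mul_delta_mx_cond /= !mulr0n !mulr1n !tens0mx subr0 sub0r opprK !mxE /=.
by rewrite mulr1.
Qed.

Lemma wstate_not_psd t : 1 / 2 < t -> ~ psd (wstate t).
Proof.
move=> t_gt /(_ singlet); rewrite -mulmxA wstate_singlet -scalemxAr mxE.
have -> : (1 - 2 * t%:C) / 4 * (adjmx singlet *m singlet) 0 0 =
    ((1 - 2 * t) / 2)%:C.
  by rewrite singlet_norm !(rmorph_nat, rmorphB, rmorphM, fmorphV); field.
by rewrite ler0c; lra.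
Qed.

Lemma wstate_bqs t : 1 / 2 < t <= 1 -> bqs (wstate t).
Proof.
move=> /andP[t_gt t_le1]; split; last by case=> /(wstate_not_psd t_gt).
by apply: wstate_popt; rewrite ger0_norm //; lra.
Qed.
End PauliState.

Section CircleDesign.
Variable R : realFieldType.

(* The points (+-1, 0), (0, +-1), (+-3/5, +-4/5), (+-4/5, +-3/5) with these
   weights integrate every polynomial of degree at most 4 in (x, z) as the
   uniform measure on the circle does.  Indices beyond 11 carry no weight; they
   are put on the circle only so that design_on_circle holds for every n. *)
Definition design_x (n : nat) : R :=
  match n with
  | 0 => 1 | 1 => -1 | 2 | 3 => 0
  | 4 | 5 => 3 / 5 | 6 | 7 => - (3 / 5) | 8 | 9 => 4 / 5 | 10 | 11 => - (4 / 5)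
  | _ => 1
  end.

Definition design_z (n : nat) : R :=
  match n with
  | 0 | 1 => 0 | 2 => 1 | 3 => -1
  | 4 | 6 => 4 / 5 | 5 | 7 => - (4 / 5) | 8 | 10 => 3 / 5 | 9 | 11 => - (3 / 5)
  | _ => 0
  end.

Definition design_weight (n : nat) : R :=
  if (n < 4)%N then 527 / 4608 else 625 / 9216.

Definition expect (f : nat -> R) : R := \sum_(0 <= n < 12) design_weight n * f n.

Definition lin_response (c0 c1 c2 : R) (n : nat) : R :=
  c0 + c1 * design_x n + c2 * design_z n.

Definition cubic_response (s : R) : R :=
  13 / 16 + 9 / 8 * s + 3 / 8 * s ^+ 2 - 1 / 8 * s ^+ 3.

Lemma design_on_circle n : design_x n ^+ 2 + design_z n ^+ 2 = 1.
Proof.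
rewrite /design_x /design_z.
by do 12 (case: n => [|n]; first by field); field.
Qed.

Lemma design_weight_ge0 n : 0 <= design_weight n.
Proof. by rewrite /design_weight; case: ifP => _; lra. Qed.

Lemma expect_lin_response c0 c1 c2 : expect (lin_response c0 c1 c2) = c0.
Proof. by rewrite /expect unlock /= /design_weight /lin_response /=; field. Qed.

Lemma expect_cubic_response_pair a b n1 n2 c0 c1 c2 :
  let s l := n1 * design_x l + n2 * design_z l in
  expect (fun l => (a * cubic_response (s l) + b * cubic_response (- s l))
                   * lin_response c0 c1 c2 l) =
  (a + b) * c0 * (13 / 16 + 3 / 16 * (n1 ^+ 2 + n2 ^+ 2)) +
  (a - b) * (9 / 16 - 3 / 64 * (n1 ^+ 2 + n2 ^+ 2)) * (c1 * n1 + c2 * n2).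
Proof.
by rewrite /expect unlock /= /design_weight /lin_response /cubic_response /=; field.
Qed.

Lemma expect_normalize k (phi : 'I_k -> nat -> R) (w : 'I_k -> R) g i :
  expect (fun l => normalize (phi^~ l) w i * g l) =
  expect (fun l => phi i l * g l)
  - w i * (\sum_j expect (fun l => phi j l * g l) - expect g).
Proof.
rewrite /expect /normalize exchange_big /= -sumrB mulr_sumr -sumrB.
by apply: eq_bigr => n _; rewrite -mulr_sumr -mulr_suml; ring.
Qed.

Lemma lin_response_ge0 c0 c1 c2 n :
  0 <= c0 -> c1 ^+ 2 + c2 ^+ 2 <= c0 ^+ 2 -> 0 <= lin_response c0 c1 c2 n.
Proof.
move=> c0_ge0 hc; have : design_x n ^+ 2 + design_z n ^+ 2 <= 1 ^+ 2.
  by rewrite design_on_circle expr1n.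
move=> /(norm_dot2_le c0_ge0 hc ler01); rewrite mulr1 ler_norml /lin_response.
by move=> /andP[+ _]; lra.
Qed.

Lemma sum_lin_response k (c0 c1 c2 : 'I_k -> R) n :
  \sum_j lin_response (c0 j) (c1 j) (c2 j) n =
  lin_response (\sum_j c0 j) (\sum_j c1 j) (\sum_j c2 j) n.
Proof. by rewrite /lin_response !big_split /= !mulr_suml. Qed.

Lemma cubic_response_ge s : -1 <= s <= 1 -> 3 / 16 <= cubic_response s.
Proof.
move=> /andP[s_ge s_le].
have : 0 <= (1 + s) ^+ 2 * (5 - s) by rewrite mulr_ge0 ?sqr_ge0 //; lra.
have -> : (1 + s) ^+ 2 * (5 - s) = 8 * (cubic_response s - 3 / 16).
  by rewrite /cubic_response; field.
lra.
Qed.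

Lemma cubic_response_le s : -1 <= s <= 1 -> cubic_response s <= 19 / 16 + s.
Proof.
move=> /andP[s_ge s_le].
have : 0 <= (1 - s) * (1 + s) * (3 - s) by rewrite !mulr_ge0 //; lra.
have -> : (1 - s) * (1 + s) * (3 - s) = 8 * (19 / 16 + s - cubic_response s).
  by rewrite /cubic_response; field.
lra.
Qed.
End CircleDesign.
Arguments design_x {R} n.
Arguments design_z {R} n.
Arguments design_weight {R} n.

Section Direction.
Variable R : rcfType.
Implicit Types a b : R.

(* At the origin the direction is the junk value (1, 0). *)
Definition dnorm a b : R := Num.sqrt (a ^+ 2 + b ^+ 2).
Definition dir1 a b : R := if dnorm a b == 0 then 1 else a / dnorm a b.
Definition dir2 a b : R := if dnorm a b == 0 then 0 else b / dnorm a b.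

Lemma sqr_dnorm a b : dnorm a b ^+ 2 = a ^+ 2 + b ^+ 2.
Proof. by rewrite sqr_sqrtr // addr_ge0 // sqr_ge0. Qed.

Lemma dnorm_ge0 a b : 0 <= dnorm a b.
Proof. exact: sqrtr_ge0. Qed.

Lemma dir_unit a b : dir1 a b ^+ 2 + dir2 a b ^+ 2 = 1.
Proof.
rewrite /dir1 /dir2; case: eqP => [_|r_neq0]; first by rewrite expr1n expr0n addr0.
by rewrite !expr_div_n -mulrDl -sqr_dnorm divff // expf_neq0 //; apply/eqP.
Qed.

Lemma dnorm_dir a b : dnorm a b * dir1 a b = a /\ dnorm a b * dir2 a b = b.
Proof.
rewrite /dir1 /dir2; case: eqP => [r0|r_neq0]; last first.
  by split; rewrite mulrC divfK //; apply/eqP.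
have := sqr_dnorm a b; rewrite r0 expr0n /= => ab0.
by rewrite !mul0r; split; nra.
Qed.
End Direction.

Section Model.
Variable R : realType.
Local Notation C := (complex R).
Implicit Types M : 'M[C]_2.

Definition tau : R := 33 / 64.

Definition dir_proj M (l : nat) : R :=
  dir1 (blochX M) (blochZ M) * design_x l + dir2 (blochX M) (blochZ M) * design_z l.

Definition alice_kernel M (l : nat) : R :=
  (bloch0 M + dnorm (blochX M) (blochZ M)) / 2 * cubic_response (dir_proj M l) +
  (bloch0 M - dnorm (blochX M) (blochZ M)) / 2 * cubic_response (- dir_proj M l).

Lemma dir_proj_bound M l : -1 <= dir_proj M l <= 1.
Proof.
have n_le : dir1 (blochX M) (blochZ M) ^+ 2 + dir2 (blochX M) (blochZ M) ^+ 2 <= 1 ^+ 2.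
  by rewrite dir_unit expr1n.
have u_le : design_x l ^+ 2 + design_z l ^+ 2 <= 1 ^+ 2 :> R.
  by rewrite design_on_circle expr1n.
by have := norm_dot2_le ler01 n_le ler01 u_le; rewrite mulr1 ler_norml.
Qed.

Lemma dnorm_bloch_le M : psd M -> dnorm (blochX M) (blochZ M) <= bloch0 M.
Proof.
move=> /psd2_bloch_bound [b0_ge0 hb].
have := sqr_dnorm (blochX M) (blochZ M); have := dnorm_ge0 (blochX M) (blochZ M).
nra.
Qed.

Lemma alice_kernel_ge M l : psd M -> 3 / 16 * bloch0 M <= alice_kernel M l.
Proof.
move=> hM; rewrite /alice_kernel; set r := dnorm _ _.
have r_le : r <= bloch0 M := dnorm_bloch_le hM.
have r_ge0 : 0 <= r := dnorm_ge0 _ _.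
have /andP[s_ge s_le] := dir_proj_bound M l.
have f1 := cubic_response_ge (dir_proj_bound M l).
have f2 : 3 / 16 <= cubic_response (- dir_proj M l).
  by apply: cubic_response_ge; apply/andP; split; lra.
have ha : 0 <= (bloch0 M + r) / 2 by lra.
have hb : 0 <= (bloch0 M - r) / 2 by lra.
have := ler_wpM2l ha f1; have := ler_wpM2l hb f2; lra.
Qed.

Lemma alice_kernel_le M l : psd M ->
  alice_kernel M l <= lin_response (19 / 16 * bloch0 M) (blochX M) (blochZ M) l.
Proof.
move=> hM; have -> : lin_response (19 / 16 * bloch0 M) (blochX M) (blochZ M) l =
    19 / 16 * bloch0 M + dnorm (blochX M) (blochZ M) * dir_proj M l.
  rewrite /lin_response /dir_proj; move: (dnorm_dir (blochX M) (blochZ M)).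
  by move: (dnorm _ _) (dir1 _ _) (dir2 _ _) => r n1 n2 [<- <-]; ring.
rewrite /alice_kernel; set r := dnorm _ _.
have r_le : r <= bloch0 M := dnorm_bloch_le hM.
have r_ge0 : 0 <= r := dnorm_ge0 _ _.
have /andP[s_ge s_le] := dir_proj_bound M l.
have f1 := cubic_response_le (dir_proj_bound M l).
have f2 : cubic_response (- dir_proj M l) <= 19 / 16 - dir_proj M l.
  by apply: cubic_response_le; apply/andP; split; lra.
have ha : 0 <= (bloch0 M + r) / 2 by lra.
have hb : 0 <= (bloch0 M - r) / 2 by lra.
have := ler_wpM2l ha f1; have := ler_wpM2l hb f2; lra.
Qed.

Lemma expect_alice_kernel M c0 c1 c2 :
  expect (fun l => alice_kernel M l * lin_response c0 c1 c2 l) =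
  c0 * bloch0 M + tau * (c1 * blochX M + c2 * blochZ M).
Proof.
rewrite (expect_cubic_response_pair ((bloch0 M + dnorm (blochX M) (blochZ M)) / 2)
  ((bloch0 M - dnorm (blochX M) (blochZ M)) / 2)).
move: (dnorm_dir (blochX M) (blochZ M)) (dir_unit (blochX M) (blochZ M)).
move: (dnorm _ _) (dir1 _ _) (dir2 _ _) => r n1 n2 [<- <-] ->.
by rewrite /tau; field.
Qed.

Definition alice_response k (A : 'I_k -> 'M[C]_2) (l : nat) : 'I_k -> R :=
  normalize (fun j => alice_kernel (A j) l) (fun j => bloch0 (A j)).

Definition bob_response k (B : 'I_k -> 'M[C]_2) (l : nat) (j : 'I_k) : R :=
  lin_response (bloch0 (B j)) (blochX (B j)) (blochZ (B j)) l.

Lemma alice_response_sum k (A : 'I_k -> 'M[C]_2) l : povm A ->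
  \sum_i alice_response A l i = 1.
Proof. by case/povm_bloch_sums => s0 _ _; apply: sum_normalize. Qed.

Lemma alice_response_ge0 k (A : 'I_k -> 'M[C]_2) l i : povm A ->
  0 <= alice_response A l i.
Proof.
move=> hA; have [s0 sX sZ] := povm_bloch_sums hA.
apply: (normalize_ge0 (c := 3 / 16)).
- by case: (psd2_bloch_bound (hA.1 i)).
- exact: alice_kernel_ge (hA.1 i).
apply: le_trans (ler_sum _ (fun j _ => alice_kernel_le l (hA.1 j))) _.
by rewrite sum_lin_response -mulr_sumr s0 sX sZ /lin_response; lra.
Qed.

Lemma bob_response_sum k (B : 'I_k -> 'M[C]_2) l : povm B ->
  \sum_j bob_response B l j = 1.
Proof.
case/povm_bloch_sums => s0 sX sZ.
by rewrite sum_lin_response s0 sX sZ /lin_response; lra.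
Qed.

Lemma bob_response_ge0 k (B : 'I_k -> 'M[C]_2) l j : povm B ->
  0 <= bob_response B l j.
Proof. by move=> hB; have [] := psd2_bloch_bound (hB.1 j); exact: lin_response_ge0. Qed.

Lemma measurable_fun_nat (f : nat -> R) : measurable_fun setT f.
Proof. by move=> _ Y _. Qed.

Lemma alice_response_valid : valid_response alice_response.
Proof.
move=> k A hA; split=> [i|l i|l]; first exact: measurable_fun_nat.
  rewrite alice_response_ge0 //=; apply: le1_of_sum_eq1 => [j|].
  - exact: alice_response_ge0.
  - exact: alice_response_sum.
exact: alice_response_sum.
Qed.

Lemma bob_response_valid : valid_response bob_response.
Proof.
move=> k B hB; split=> [j|l j|l]; first exact: measurable_fun_nat.
  rewrite bob_response_ge0 //=; apply: le1_of_sum_eq1 => [i|].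
  - exact: bob_response_ge0.
  - exact: bob_response_sum.
exact: bob_response_sum.
Qed.

Lemma expect_alice_response k (A : 'I_k -> 'M[C]_2) i c0 c1 c2 : povm A ->
  expect (fun l => alice_response A l i * lin_response c0 c1 c2 l) =
  c0 * bloch0 (A i) + tau * (c1 * blochX (A i) + c2 * blochZ (A i)).
Proof.
move=> hA; have [s0 sX sZ] := povm_bloch_sums hA.
rewrite expect_normalize expect_lin_response.
under eq_bigr do rewrite expect_alice_kernel.
rewrite expect_alice_kernel big_split /= -mulr_sumr -mulr_sumr big_split /=.
by rewrite -!mulr_sumr s0 sX sZ; ring.
Qed.
End Model.

Section DiracSum.
Variables (R : realType) (N : nat) (w : nat -> {nonneg R}).

Local Notation mu := (msum (fun n => mscale (w n) \d_(n : nat)) N).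

Lemma msum_dirac_setT : mu [set: nat] = (\sum_(n < N) (w n)%:num)%:E.
Proof.
rewrite /msum -sumEFin; apply: eq_bigr => n _.
by rewrite /= /mscale /= diracT mule1.
Qed.

Lemma Rintegral_msum_dirac (f : nat -> R) : (forall n, 0 <= f n) ->
  Rintegral mu setT f = \sum_(n < N) (w n)%:num * f n.
Proof.
move=> f_ge0; rewrite /Rintegral.
rewrite (@ge0_integral_measure_sum _ _ R (fun n => mscale (w n) \d_(n : nat))
  _ measurableT (fun n => (f n)%:E)); last 2 first.
- by move=> n _; rewrite lee_fin.
- by move=> _ Y _.
have dirac_n n :
    (\int[mscale (w n) \d_(n : nat)]_x (f x)%:E = ((w n)%:num * f n)%:E)%E.
  rewrite (@ge0_integral_mscale _ _ R \d_(n : nat) setT measurableT (w n)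
    (fun x => (f x)%:E)); last 2 first.
  - by move=> _ Y _.
  - by move=> x _; rewrite lee_fin.
  by rewrite integral_dirac //= diracT mul1e -EFinM.
by under eq_bigr do rewrite dirac_n; rewrite sumEFin.
Qed.
End DiracSum.

Section DesignProbability.
Variable R : realType.

Definition design_prob : set nat -> \bar R :=
  msum (fun n => mscale (NngNum (design_weight_ge0 R n)) \d_(n : nat)) 12.

HB.instance Definition _ := Measure.on design_prob.

Let design_prob_setT : design_prob [set: nat] = 1%E.
Proof.
rewrite /design_prob msum_dirac_setT /=.
rewrite !big_ord_recr big_ord0 /= /design_weight /=.
by congr (_%:E); field.
Qed.

HB.instance Definition _ :=
  @Measure_isProbability.Build _ _ R design_prob design_prob_setT.

Lemma Rintegral_design (f : nat -> R) : (forall n, 0 <= f n) ->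
  Rintegral (design_prob : probability nat R) setT f = expect f.
Proof. by move=> f_ge0; rewrite Rintegral_msum_dirac // /expect big_mkord. Qed.
End DesignProbability.

Theorem proposition1 (R : realType) :
  exists W : 'M[complex R]_(2 * 2), bqs W /\
  exists (d : measure_display) (T : measurableType d)
         (omega : probability T R) (pA pB : response R T 2),
    valid_response pA /\ valid_response pB /\
    forall (k l : nat) (A : 'I_k -> 'M[complex R]_2)
           (B : 'I_l -> 'M[complex R]_2),
      povm A -> povm B ->
      forall (i : 'I_k) (j : 'I_l),
        \tr (W *m (A i *t B j)) =
        (Rintegral omega setT (fun lam => pA k A lam i * pB l B lam j))%:C.
Proof.
exists (wstate (tau R)); split.
  by apply: wstate_bqs; rewrite /tau; apply/andP; split; lra.
exists default_measure_display, nat, (design_prob R).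
exists (@alice_response R), (@bob_response R).
split; first exact: alice_response_valid.
split; first exact: bob_response_valid.
move=> k l A B hA hB i j.
rewrite mxtrace_wstate_psd; [congr (_%:C) | exact: hA.1 i | exact: hB.1 j].
transitivity (expect (fun l => alice_response A l i * bob_response B l j)).
  by rewrite /bob_response expect_alice_response //; ring.
symmetry; apply: Rintegral_design => n.
by apply: mulr_ge0; [exact: alice_response_ge0 | exact: bob_response_ge0].
Qed.
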